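(* Let $(\star)$ be a linear system over $\mathbb{F}_q$ in $k$ variables, and suppose that $(\star)$ is equivalent to a linear system $(\star')$ whose coefficient matrix (after reordering the variables) has the block form $A'=\begin{pmatrix}A_1&0\\0&A_2\end{pmatrix}$ with $A_1\in\mathbb{F}_q^{m_1\times k_1}$, $A_2\in\mathbb{F}_q^{m_2\times k_2}$ and $m_1,m_2,k_1,k_2\ne0$. Then $(\star)$ is temperate if and only if the systems with coefficient matrices $A_1$ and $A_2$ are both temperate.
   Context: A linear system with coefficient matrix $A\in\mathbb{F}_q^{m\times k}$ has solutions $(x_1,\dots,x_k)\in(\mathbb{F}_q^n)^k$ with $\sum_j a_{ij}x_j=0$ for all $i$. Two systems are equivalent if each equation of one is a linear combination of the equations of the other. A solution is generic if every $b\in\mathbb{F}_q^k$ with $b_1+\dots+b_k=0$ and $\sum_jb_jx_j=0$ lies in the row space of the coefficient matrix. A system is temperate if there exist constants $\beta,\gamma>0$ with $\gamma<q$ such that for every $n$ every $S\subseteq\mathbb{F}_q^n$ with $|S|\ge\beta\gamma^n$ contains a generic solution in $S^k$. *)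

From HB Require Import structures.
From mathcomp Require Import all_boot all_order all_algebra all_fingroup.
From mathcomp Require Import Rstruct.
From Stdlib Require Import Reals.
Set Implicit Arguments. Unset Strict Implicit. Unset Printing Implicit Defensive.
Import Order.TTheory GRing.Theory Num.Theory.
Local Open Scope ring_scope.

(* A tuple
   (x_1,...,x_k) in (F^n)^k is encoded as x : 'M[F]_(k,n) whose j-th row is x_j.
   Then sum_j a_ij x_j = 0 for all i  iff  A *m x = 0. *)
Definition is_solution (F : fieldType) (m k n : nat)
  (A : 'M[F]_(m, k)) (x : 'M[F]_(k, n)) : Prop := A *m x = 0.

Definition is_generic (F : fieldType) (m k n : nat)
  (A : 'M[F]_(m, k)) (x : 'M[F]_(k, n)) : Prop :=
  forall b : 'rV[F]_k, \sum_(j < k) b 0 j = 0 -> b *m x = 0 -> (b <= A)%MS.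

Definition temperate (F : finFieldType) (m k : nat) (A : 'M[F]_(m, k)) : Prop :=
  exists beta gamma : R,
    0 < beta /\ 0 < gamma /\ gamma < (#|F|%:R : R) /\
    forall (n : nat) (S : {set 'rV[F]_n}),
      beta * gamma ^+ n <= (#|S|%:R : R) ->
      exists x : 'M[F]_(k, n),
        (forall j : 'I_k, row j x \in S) /\ is_solution A x /\ is_generic A x.

From HB Require Import structures.
From mathcomp Require Import all_boot all_order all_algebra all_fingroup.
From mathcomp Require Import Rstruct zify ring lra.
Set Implicit Arguments. Unset Strict Implicit. Unset Printing Implicit Defensive.
Import Order.TTheory GRing.Theory Num.Theory.
Local Open Scope ring_scope.
Local Notation R := Rdefinitions.R.

(* Temperateness only depends on the row space and is invariant under
   permuting the variables, so it suffices to treat B = diag(A1, A2).  A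
   generic solution of B restricts to generic solutions of A1 and A2.
   Conversely, a temperate system has zero row sums (test it on the
   hyperplane x_0 = 1), so constant columns may be appended to its
   solutions.  Slice a dense S in F_q^(n+1) by its first coordinate.  If two
   slices t1 <> t2 are large, split the other n coordinates into halves
   a + b; averaging finds a large fibre of slice t1 over the first a
   coordinates, where A1 is solved, and one of slice t2 over the last b
   coordinates, where A2 is solved; padding with constants gives a solution
   of B, generic because t1 <> t2 forces the coefficient sums of both blocks
   to vanish separately.  Otherwise one slice carries almost all of S and we
   recurse in dimension n.  With g = max(gamma1, gamma2), the first case
   needs |S| of order (q g)^(n/2), which is O(gamma^n) as soon as
   q g <= gamma^2; the second loses a factor 1 - q eps of |S|, paid for by
   one factor gamma when eps is small enough. *)

Lemma bernoulli_ineq (K : realFieldType) (h : K) n :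
  0 <= h -> 1 + n%:R * h <= (1 + h) ^+ n.
Proof.
move=> h0; elim: n => [|n IH]; first by rewrite mul0r addr0 expr0.
rewrite exprS -natr1.
apply: (le_trans (y := (1 + h) * (1 + n%:R * h))); last first.
  by apply: ler_wpM2l; rewrite // addr_ge0.
have : 0 <= n%:R * h * h by rewrite !mulr_ge0.
lra.
Qed.

Lemma exprn_outgrows (K : archiRealFieldType) (c ga Q : K) :
  0 < ga -> ga < Q -> exists n : nat, c * ga ^+ n.+1 <= Q ^+ n.
Proof.
move=> ga0 gaQ; pose h := Q / ga - 1.
have h0 : 0 < h by rewrite subr_gt0 ltr_pdivlMr // mul1r.
pose n := Num.bound (`|c * ga| / h); exists n.
have le_n : `|c * ga| / h < n%:R by apply: archi_boundP; rewrite divr_ge0 // ltW.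
have : c * ga <= (Q / ga) ^+ n.
  have -> : Q / ga = 1 + h by rewrite /h addrC subrK.
  apply: le_trans (ler_norm _) _; apply: le_trans (bernoulli_ineq n (ltW h0)).
  rewrite ltr_pdivrMr // in le_n; have := ltW le_n; lra.
by rewrite expr_div_n ler_pdivlMr ?exprn_gt0 // exprS mulrA.
Qed.

Lemma mixed_power_bound (K : realFieldType) (Q g gam : K) :
  0 <= g <= gam -> 1 <= gam -> 1 <= Q -> g * Q <= gam ^+ 2 ->
  forall i j : nat, (i <= j.+1)%N -> Q ^+ i * g ^+ j <= Q * gam ^+ (i + j).
Proof.
move=> /andP[g0 g_gam] gam1 Q1 gQ i j; elim: j i => [|j IH] [|i] ij.
- by rewrite !expr0 !mulr1.
- move: ij; rewrite ltnS leqn0 => /eqP->.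
  by rewrite expr0 mulr1 addn0 ler_peMr // ltW // (lt_le_trans ltr01).
- rewrite expr0 mul1r add0n; apply: le_trans (lerXn2r _ _ _ g_gam) _.
  + by rewrite nnegrE.
  + by rewrite nnegrE (le_trans g0).
  by rewrite ler_peMl // exprn_ge0 // (le_trans ler01).
have Q0 : 0 <= Q by rewrite (le_trans ler01).
rewrite addSn addnS !exprS.
have -> : Q * Q ^+ i * (g * g ^+ j) = (g * Q) * (Q ^+ i * g ^+ j) by ring.
have -> : Q * (gam * (gam * gam ^+ (i + j))) = gam ^+ 2 * (Q * gam ^+ (i + j)).
  by rewrite expr2; ring.
by apply: ler_pM; rewrite ?mulr_ge0 ?exprn_ge0 // IH.
Qed.

Lemma dense_parameters (K : realFieldType) (Q be g : K) : 0 < be -> 1 <= g < Q ->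
  exists beta gam eps : K, [/\ 1 < beta, 0 < gam < Q, 0 <= eps,
    1 <= (1 - Q * eps) * gam &
    forall i j : nat, (i <= j.+1)%N ->
      Q ^+ i * (be * g ^+ j) <= eps * (beta * gam ^+ (i + j).+1)].
Proof.
move=> be0 /andP[g1 gQ]; pose gam := (g + Q) / 2.
have gam1 : 1 < gam by rewrite /gam; lra.
have gamQ : gam < Q by rewrite /gam; lra.
have gam0 : 0 < gam by lra.
have Q0 : 0 < Q by lra.
have gQ_gam : g * Q <= gam ^+ 2 by rewrite /gam expr2; nra.
(* eps makes the recursion into a dominant slice lose exactly one factor gam. *)
pose eps := (1 - gam^-1) / Q.
have Qeps : Q * eps = 1 - gam^-1 by rewrite /eps mulrCA mulfV ?mulr1 // gt_eqF.
have eps0 : 0 < eps by rewrite divr_gt0 // subr_gt0 invf_lt1.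
pose c := be * Q / (eps * gam); pose beta := c + 2.
have c0 : 0 <= c by apply: divr_ge0; apply: mulr_ge0; apply: ltW.
exists beta, gam, eps; split.
- by rewrite /beta; lra.
- by rewrite gam0 gamQ.
- exact: ltW.
- by rewrite Qeps opprB addrC subrK mulVf // gt_eqF.
move=> i j ij; rewrite mulrCA.
have g_range : 0 <= g <= gam by rewrite (le_trans ler01 g1) /gam; lra.
have := mixed_power_bound g_range (ltW gam1) (ltW (le_lt_trans g1 gQ)) gQ_gam ij.
move=> /(ler_wpM2l (ltW be0)) /le_trans; apply.
have -> : be * (Q * gam ^+ (i + j)) = c * (eps * gam ^+ (i + j).+1).
  by rewrite /c exprS; field; rewrite !gt_eqF.
rewrite [leRHS]mulrCA; apply: ler_wpM2r; last by rewrite /beta; lra.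
by rewrite mulr_ge0 ?exprn_ge0 // ltW.
Qed.

Lemma card_set_sum (T : finType) (P : pred T) :
  #|[set x | P x]| = (\sum_x P x)%N.
Proof.
by rewrite -sum1_card big_mkcond; apply: eq_bigr => x _; rewrite inE; case: (P x).
Qed.

Lemma exists_above_average (T : finType) (t0 : T) (f : T -> nat) :
  exists t, (\sum_x f x <= #|T| * f t)%N.
Proof.
have [t _ tmax] := @arg_maxnP T t0 predT f isT; exists t.
by rewrite -sum_nat_const leq_sum // => x _; apply: tmax.
Qed.

Section Fibers.
Variable F : finFieldType.

Definition lfiber a b (S : {set 'rV[F]_(a + b)}) (u : 'rV_a) : {set 'rV[F]_b} :=
  [set v | row_mx u v \in S].

Definition rfiber a b (S : {set 'rV[F]_(a + b)}) (v : 'rV_b) : {set 'rV[F]_a} :=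
  [set u | row_mx u v \in S].

Lemma card_row_mx_sum a b (S : {set 'rV[F]_(a + b)}) :
  #|S| = (\sum_(u : 'rV_a) \sum_(v : 'rV_b) (row_mx u v \in S))%N.
Proof.
rewrite -sum1_card big_mkcond [RHS]pair_bigA /=.
rewrite (reindex (fun uv : 'rV_a * 'rV_b => row_mx uv.1 uv.2)) /=; last first.
  exists (fun w => (lsubmx w, rsubmx w)) => [[u v] _ | w _] /=.
    by rewrite row_mxKl row_mxKr.
  by rewrite hsubmxK.
by apply: eq_bigr => uv _; case: (_ \in S).
Qed.

Lemma card_lfibers a b (S : {set 'rV[F]_(a + b)}) :
  #|S| = (\sum_(u : 'rV_a) #|lfiber S u|)%N.
Proof. by rewrite card_row_mx_sum; apply: eq_bigr => u _; rewrite card_set_sum. Qed.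

Lemma card_rfibers a b (S : {set 'rV[F]_(a + b)}) :
  #|S| = (\sum_(v : 'rV_b) #|rfiber S v|)%N.
Proof.
by rewrite card_row_mx_sum exchange_big; apply: eq_bigr => v _; rewrite card_set_sum.
Qed.

Lemma exists_large_lfiber a b (S : {set 'rV[F]_(a + b)}) :
  exists u : 'rV_a, (#|S| <= #|F| ^ a * #|lfiber S u|)%N.
Proof.
have [u le_u] := exists_above_average 0 (fun u : 'rV[F]_a => #|lfiber S u|).
by exists u; rewrite card_lfibers -[X in (_ ^ X)%N]mul1n -card_mx.
Qed.

Lemma exists_large_rfiber a b (S : {set 'rV[F]_(a + b)}) :
  exists v : 'rV_b, (#|S| <= #|F| ^ b * #|rfiber S v|)%N.
Proof.
have [v le_v] := exists_above_average 0 (fun v : 'rV[F]_b => #|rfiber S v|).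
by exists v; rewrite card_rfibers -[X in (_ ^ X)%N]mul1n -card_mx.
Qed.

Lemma card_le_dominant_lfiber p n (S : {set 'rV[F]_(p + n)})
    (t0 : 'rV_p) (c : R) :
  0 <= c -> (forall t, t != t0 -> (#|lfiber S t|%:R : R) <= c) ->
  (#|S|%:R : R) <= #|lfiber S t0|%:R + (#|F| ^ p)%:R * c.
Proof.
move=> c0 small; rewrite card_lfibers natr_sum (bigD1 t0) //= lerD2l big_mkcond /=.
apply: (le_trans (y := \sum_(t : 'rV[F]_p) c)).
  by apply: ler_sum => t _; case: ifPn => [/small | _].
by rewrite sumr_const card_mx mul1n mulr_natl.
Qed.

End Fibers.

Section GenericSolutions.
Variable F : finFieldType.

Definition ones k : 'cV[F]_k := const_mx 1.

Definition has_generic_solution m k n (A : 'M[F]_(m, k)) (S : {set 'rV[F]_n}) :=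
  exists x : 'M[F]_(k, n),
    (forall j : 'I_k, row j x \in S) /\ is_solution A x /\ is_generic A x.

Definition dense_generic m k (A : 'M[F]_(m, k)) (beta gamma : R) :=
  forall n (S : {set 'rV[F]_n}),
    beta * gamma ^+ n <= (#|S|%:R : R) -> has_generic_solution A S.

Lemma temperateE m k (A : 'M[F]_(m, k)) :
  temperate A <-> exists beta gamma : R,
    [/\ 0 < beta, 0 < gamma < (#|F|%:R : R) & dense_generic A beta gamma].
Proof.
split=> [[b [g [b0 [g0 [gQ dense]]]]] | [b [g [b0 /andP[g0 gQ] dense]]]].
  by exists b, g; rewrite g0 gQ.
by exists b, g.
Qed.

Lemma temperate_transfer m m' k k' (A : 'M[F]_(m, k)) (C : 'M[F]_(m', k')) :
  (forall n (S : {set 'rV[F]_n}), has_generic_solution A S -> has_generic_solution C S) ->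
  temperate A -> temperate C.
Proof.
move=> AC /temperateE[b [g [b0 gQ dense]]]; apply/temperateE.
by exists b, g; split=> // n S /dense /AC.
Qed.

Lemma dense_generic_mono m k (A : 'M[F]_(m, k)) (be be' ga ga' : R) :
  0 <= be <= be' -> 0 <= ga <= ga' ->
  dense_generic A be ga -> dense_generic A be' ga'.
Proof.
move=> /andP[be0 be_be'] /andP[ga0 ga_ga'] dense n S le_S; apply: dense.
apply: le_trans le_S; apply: ler_pM => //; first exact: exprn_ge0.
by rewrite lerXn2r // nnegrE (le_trans ga0).
Qed.

Lemma mulmx_ones k (b : 'rV[F]_k) : b *m ones k = (\sum_j b 0 j)%:M.
Proof.
apply/matrixP => i i'; rewrite !mxE !ord1 eqxx mulr1n.
by apply: eq_bigr => j _; rewrite mxE mulr1.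
Qed.

Lemma is_genericE m k n (A : 'M[F]_(m, k)) (x : 'M[F]_(k, n)) :
  is_generic A x <->
  forall b : 'rV_k, b *m ones k = 0 -> b *m x = 0 -> (b <= A)%MS.
Proof.
have sum0E (b : 'rV_k) : (\sum_j b 0 j = 0) <-> (b *m ones k = 0).
  rewrite mulmx_ones; split=> [-> | /(congr1 (fun M : 'M_1 => M 0 0))].
    exact: raddf0.
  by rewrite !mxE eqxx mulr1n.
by split=> gen b /sum0E; apply: gen.
Qed.

Lemma row_ones_mul k p (j : 'I_k) (t : 'rV[F]_p) : row j (ones k *m t) = t.
Proof. by apply/rowP => i; rewrite !mxE big_ord1 !mxE mul1r. Qed.

Lemma temperate_mulmx_ones m k (A : 'M[F]_(m, k)) :
  temperate A -> A *m ones k = 0.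
Proof.
case/temperateE=> be [ga [_ /andP[ga0 gaQ] dense]].
have [n le_n] := exprn_outgrows be ga0 gaQ.
pose S : {set 'rV[F]_(1 + n)} := [set row_mx (const_mx 1) u | u : 'rV_n].
have card_S : #|S| = (#|F| ^ n)%N.
  rewrite card_imset; first by rewrite card_mx mul1n.
  by move=> u v /eq_row_mx[].
have /dense[x [Sx [Ax _]]] : be * ga ^+ (1 + n) <= #|S|%:R by rewrite card_S natrX.
have -> : ones k = col (lshift n 0) x.
  apply/colP => j; have /imsetP[u _ xu] := Sx j.
  have := congr1 (fun r : 'rV_(1 + n) => r 0 (lshift n 0)) xu.
  by rewrite /= row_mxEl !mxE => ->.
by rewrite colE mulmxA Ax mul0mx.
Qed.

Lemma generic_solution_eqmx m m' k n (A : 'M[F]_(m, k)) (C : 'M[F]_(m', k))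
    (S : {set 'rV[F]_n}) :
  (A == C)%MS -> has_generic_solution A S -> has_generic_solution C S.
Proof.
case/andP=> sAC /submxP[D defC] [x [Sx [Ax genx]]].
exists x; split=> //; split; first by rewrite /is_solution defC -mulmxA Ax mulmx0.
by move=> b sb bx; apply: submx_trans (genx b sb bx) sAC.
Qed.

Lemma generic_solution_col_perm m k n (s : 'S_k) (A : 'M[F]_(m, k))
    (S : {set 'rV[F]_n}) :
  has_generic_solution A S -> has_generic_solution (col_perm s A) S.
Proof.
case=> x [Sx [Ax /is_genericE genx]]; exists (row_perm s x); split; [|split].
- by move=> j; rewrite (_ : row j _ = row (s j) x) //; apply/rowP => i; rewrite !mxE.
- by rewrite /is_solution mul_col_perm -row_permM mulVg row_perm1.
apply/is_genericE => b b1 bx.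
have -> : b = col_perm s (col_perm s^-1 b) by rewrite -col_permM mulgV col_perm1.
rewrite !(col_permE s) submxMr // genx ?mul_col_perm ?invgK //.
by rewrite row_perm_const.
Qed.

Lemma temperate_col_perm_eqmx m m' k (A : 'M[F]_(m, k)) (C : 'M[F]_(m', k))
    (s : 'S_k) :
  (A == col_perm s C)%MS -> temperate A <-> temperate C.
Proof.
move=> eqAC; have eqCA : (col_perm s C == A)%MS by case/andP: eqAC => ? ?; apply/andP.
split; apply: temperate_transfer => n S.
  move=> /(generic_solution_eqmx eqAC) /(generic_solution_col_perm s^-1).
  by rewrite -col_permM mulVg col_perm1.
by move=> /(generic_solution_col_perm s) /(generic_solution_eqmx eqCA).
Qed.

Lemma generic_solution_lfiber m k p n (A : 'M[F]_(m, k))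
    (S : {set 'rV[F]_(p + n)}) (t : 'rV_p) :
  A *m ones k = 0 -> has_generic_solution A (lfiber S t) -> has_generic_solution A S.
Proof.
move=> A1 [x [Sx [Ax /is_genericE genx]]].
exists (row_mx (ones k *m t) x); split; [|split].
- by move=> j; rewrite row_row_mx row_ones_mul; have := Sx j; rewrite inE.
- by rewrite /is_solution mul_mx_row mulmxA A1 mul0mx Ax row_mx0.
apply/is_genericE => b b1; rewrite mul_mx_row mulmxA b1 mul0mx.
by move/eqP; rewrite row_mx_eq0 => /andP[_ /eqP]; apply: genx.
Qed.

Section BlockSystem.
Variables (m1 m2 k1 k2 : nat) (A1 : 'M[F]_(m1, k1)) (A2 : 'M[F]_(m2, k2)).
Local Notation A := (block_mx A1 0 0 A2).

Lemma submx_block_diag (b1 : 'rV_k1) (b2 : 'rV_k2) :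
  (row_mx b1 b2 <= A)%MS = (b1 <= A1)%MS && (b2 <= A2)%MS.
Proof.
apply/idP/andP => [/submxP[D] | [/submxP[D1 ->] /submxP[D2 ->]]].
  rewrite -[D]hsubmxK mul_row_block !mulmx0 addr0 add0r => /eq_row_mx[-> ->].
  by rewrite !submxMl.
by apply/submxP; exists (row_mx D1 D2); rewrite mul_row_block !mulmx0 addr0 add0r.
Qed.

Lemma is_solution_block n (X1 : 'M_(k1, n)) (X2 : 'M_(k2, n)) :
  is_solution A (col_mx X1 X2) <-> is_solution A1 X1 /\ is_solution A2 X2.
Proof.
rewrite /is_solution mul_block_col !mul0mx addr0 add0r.
split=> [/eqP | [-> ->]]; last exact: col_mx0.
by rewrite col_mx_eq0 => /andP[/eqP-> /eqP->].
Qed.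

Lemma is_generic_block n (X1 : 'M_(k1, n)) (X2 : 'M_(k2, n)) :
  is_generic A (col_mx X1 X2) <->
  forall (b1 : 'rV_k1) (b2 : 'rV_k2), b1 *m ones k1 + b2 *m ones k2 = 0 ->
    b1 *m X1 + b2 *m X2 = 0 -> (b1 <= A1)%MS /\ (b2 <= A2)%MS.
Proof.
have onesE : ones (k1 + k2) = col_mx (ones k1) (ones k2) by rewrite /ones col_mx_const.
rewrite is_genericE; split=> [gen b1 b2 b12 bX | gen b].
  by apply/andP; rewrite -submx_block_diag; apply: gen; rewrite ?onesE mul_row_col.
rewrite -[b]hsubmxK onesE !mul_row_col submx_block_diag => b12 bX.
by apply/andP; apply: gen.
Qed.

Lemma generic_solution_block n (S : {set 'rV[F]_n}) :
  has_generic_solution A S -> has_generic_solution A1 S /\ has_generic_solution A2 S.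
Proof.
case=> x; rewrite -[x]vsubmxK => -[Sx [/is_solution_block[X1 X2] /is_generic_block gen]].
split; [exists (usubmx x) | exists (dsubmx x)]; split; [|split| |split] => //.
- by move=> j; have := Sx (lshift k2 j); rewrite rowKu.
- apply/is_genericE => b b1 bX.
  by have [] := gen b 0; rewrite ?mul0mx ?addr0.
- by move=> j; have := Sx (rshift k1 j); rewrite rowKd.
- apply/is_genericE => b b1 bX.
  by have [] := gen 0 b; rewrite ?mul0mx ?add0r.
Qed.

Hypotheses (A1ones : A1 *m ones k1 = 0) (A2ones : A2 *m ones k2 = 0).

Lemma generic_solution_two_lfibers p a b (S : {set 'rV[F]_(p + (a + b))})
    (t1 t2 : 'rV_p) (v1 : 'rV_b) (u2 : 'rV_a) :
  t1 != t2 ->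
  has_generic_solution A1 (rfiber (lfiber S t1) v1) ->
  has_generic_solution A2 (lfiber (lfiber S t2) u2) ->
  has_generic_solution A S.
Proof.
move=> t12 [X1 [SX1 [AX1 /is_genericE genX1]]] [X2 [SX2 [AX2 /is_genericE genX2]]].
exists (col_mx (row_mx (ones k1 *m t1) (row_mx X1 (ones k1 *m v1)))
               (row_mx (ones k2 *m t2) (row_mx (ones k2 *m u2) X2))).
split; [|split].
- move=> j; case: (split_ordP j) => l ->; rewrite ?rowKu ?rowKd !row_row_mx !row_ones_mul.
    by have := SX1 l; rewrite !inE.
  by have := SX2 l; rewrite !inE.
- apply/is_solution_block; rewrite /is_solution !mul_mx_row !mulmxA.
  by rewrite A1ones A2ones !mul0mx AX1 AX2 !row_mx0.
apply/is_generic_block => b1 b2 b12.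
have b2E : b2 *m ones k2 = - (b1 *m ones k1).
  by apply/eqP; rewrite -addr_eq0 addrC b12.
rewrite !mul_mx_row !add_row_mx !mulmxA b2E !mulNmx.
move/eqP; rewrite !row_mx_eq0 => /andP[e1 /andP[e2 e3]].
have b1ones : b1 *m ones k1 = 0.
  (* The first coordinate block reads (b1 *m ones k1) *m (t1 - t2) = 0. *)
  move: e1; rewrite -mulmxBr [b1 *m ones k1]mx11_scalar mul_scalar_mx scaler_eq0.
  by rewrite subr_eq0 (negbTE t12) orbF => /eqP->; rewrite raddf0.
move: e2 e3; rewrite b1ones !mul0mx oppr0 addr0 add0r => /eqP e2 /eqP e3.
by split; [apply: genX1 | apply: genX2]; rewrite // b2E b1ones oppr0.
Qed.

End BlockSystem.

End GenericSolutions.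

Section DenseBlock.
Variables (F : finFieldType) (m1 m2 k1 k2 : nat).
Variables (A1 : 'M[F]_(m1, k1)) (A2 : 'M[F]_(m2, k2)).
Hypotheses (A1ones : A1 *m ones F k1 = 0) (A2ones : A2 *m ones F k2 = 0).
Local Notation A := (block_mx A1 0 0 A2).
Local Notation q := (#|F|%:R : R).
Variables (be g beta gam eps : R).
Hypotheses (dense1 : dense_generic A1 be g) (dense2 : dense_generic A2 be g).
Hypotheses (beta_gt1 : 1 < beta) (gam_ge0 : 0 <= gam) (eps_ge0 : 0 <= eps).
Hypothesis shrink : 1 <= (1 - q * eps) * gam.
Hypothesis split_bound : forall i j : nat, (i <= j.+1)%N ->
  q ^+ i * (be * g ^+ j) <= eps * (beta * gam ^+ (i + j).+1).

Lemma generic_solution_two_dense_lfibers n (S : {set 'rV[F]_(1 + n)}) (t1 t2 : 'rV_1) :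
  t1 != t2 ->
  eps * (beta * gam ^+ n.+1) <= #|lfiber S t1|%:R ->
  eps * (beta * gam ^+ n.+1) <= #|lfiber S t2|%:R ->
  has_generic_solution A S.
Proof.
have : [/\ n./2 + uphalf n = n, n./2 <= (uphalf n).+1 & uphalf n <= (n./2).+1]%N.
  have := odd_double_half n; rewrite uphalf_half -addnn.
  by case: (odd n) => /= e; split; lia.
move: (n./2) (uphalf n) => a b [ab_n ab ba] t12 S1 S2; subst n.
have q_gt0 (i : nat) : 0 < q ^+ i.
  by rewrite exprn_gt0 // ltr0n; apply/card_gt0P; exists 0.
have [v1 le_v1] := exists_large_rfiber (lfiber S t1).
have [u2 le_u2] := exists_large_lfiber (lfiber S t2).
apply: (generic_solution_two_lfibers A1ones A2ones t12 (v1 := v1) (u2 := u2)).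
  apply: dense1; rewrite -(ler_pM2l (q_gt0 b)).
  apply: le_trans (split_bound ba) _; rewrite addnC; apply: le_trans S1 _.
  by rewrite -natrX -natrM ler_nat.
apply: dense2; rewrite -(ler_pM2l (q_gt0 a)).
apply: le_trans (split_bound ab) _; apply: le_trans S2 _.
by rewrite -natrX -natrM ler_nat.
Qed.

Lemma dense_generic_block : dense_generic A beta gam.
Proof.
have Aones : A *m ones F (k1 + k2) = 0.
  by rewrite /ones -col_mx_const mul_block_col !mul0mx addr0 add0r A1ones A2ones col_mx0.
have shrink_ge0 : 0 <= 1 - q * eps.
  by rewrite leNgt; apply/negP => /ltW/mulr_le0_ge0/(_ gam_ge0); move: shrink; lra.
elim=> [|n IH] S le_S.
  have : (#|S| <= 1)%N by rewrite (leq_trans (max_card _)) // card_mx.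
  by rewrite -(ler_nat R) => /(le_trans le_S); rewrite expr0 mulr1 leNgt beta_gt1.
pose S' : {set 'rV[F]_(1 + n)} := S.
have [t0 _ t0max] := @arg_maxnP _ (0 : 'rV[F]_1) predT (fun t => #|lfiber S' t|) isT.
have le_S' : eps * (beta * gam ^+ n.+1) <= eps * #|S|%:R := ler_wpM2l eps_ge0 le_S.
case: (boolP [exists t, (t != t0) && (eps * #|S|%:R <= #|lfiber S' t|%:R)]).
  case/existsP=> t /andP[t_t0 big_t].
  apply: (generic_solution_two_dense_lfibers (t1 := t0) (t2 := t)).
  - by rewrite eq_sym.
  - by apply: le_trans le_S' (le_trans big_t _); rewrite ler_nat; apply: t0max.
  - exact: le_trans le_S' big_t.
move/existsPn=> small; apply: (generic_solution_lfiber (t := t0) Aones); apply: IH.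
have le_t0 : (1 - q * eps) * #|S|%:R <= #|lfiber S' t0|%:R.
  have := @card_le_dominant_lfiber _ _ _ S' t0 (eps * #|S|%:R).
  rewrite mulr_ge0 ?ler0n // expn1 => /(_ isT) dominant.
  suff /dominant : forall t, t != t0 -> (#|lfiber S' t|%:R : R) <= eps * #|S|%:R by lra.
  by move=> t t_t0; have := small t; rewrite t_t0 /= -ltNge => /ltW.
apply: le_trans (le_trans (ler_wpM2l shrink_ge0 le_S) le_t0).
have -> : (1 - q * eps) * (beta * gam ^+ n.+1) = (1 - q * eps) * gam * (beta * gam ^+ n).
  by rewrite exprS; ring.
by rewrite ler_peMl // mulr_ge0 ?exprn_ge0 // ltW // (lt_trans ltr01).
Qed.

End DenseBlock.

Lemma temperate_block (F : finFieldType) m1 m2 k1 k2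
    (A1 : 'M[F]_(m1, k1)) (A2 : 'M[F]_(m2, k2)) :
  temperate (block_mx A1 0 0 A2) <-> temperate A1 /\ temperate A2.
Proof.
split=> [tA | [tA1 tA2]].
  by split; apply: temperate_transfer tA => n S /generic_solution_block[].
have [A1ones A2ones] := (temperate_mulmx_ones tA1, temperate_mulmx_ones tA2).
case/temperateE: tA1 => be1 [ga1 [be1_gt0 /andP[ga1_gt0 ga1Q] dense1]].
case/temperateE: tA2 => be2 [ga2 [be2_gt0 /andP[ga2_gt0 ga2Q] dense2]].
have q_gt1 : 1 < (#|F|%:R : R).
  by rewrite ltr1n; apply/card_gt1P; exists 0, 1; rewrite eq_sym oner_neq0.
pose g := Num.max (Num.max ga1 ga2) 1.
have g_range : 1 <= g < #|F|%:R by rewrite !le_max !gt_max lexx orbT ga1Q ga2Q q_gt1.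
have be_gt0 : 0 < be1 + be2 by rewrite addr_gt0.
have [beta [gam [eps [beta_gt1 /andP[gam_gt0 gamQ] eps_ge0 shrink split_bound]]]] :=
  dense_parameters be_gt0 g_range.
apply/temperateE; exists beta, gam; split; rewrite ?gam_gt0 ?gamQ ?(lt_trans ltr01) //.
apply: (dense_generic_block A1ones A2ones _ _ beta_gt1 (ltW gam_gt0) eps_ge0 shrink
          split_bound).
- apply: dense_generic_mono dense1.
  + by rewrite (ltW be1_gt0) lerDl ltW.
  + by rewrite (ltW ga1_gt0) !le_max lexx.
- apply: dense_generic_mono dense2.
  + by rewrite (ltW be2_gt0) lerDr ltW.
  + by rewrite (ltW ga2_gt0) !le_max lexx orbT.
Qed.

Theorem proposition5p4 (F : finFieldType) (m m1 m2 k1 k2 : nat)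
  (A : 'M[F]_(m, k1 + k2)) (A1 : 'M[F]_(m1, k1)) (A2 : 'M[F]_(m2, k2))
  (s : 'S_(k1 + k2)) :
  (0 < m1)%N -> (0 < m2)%N -> (0 < k1)%N -> (0 < k2)%N ->
  (A == col_perm s (block_mx A1 0 0 A2))%MS ->
  temperate A <-> (temperate A1 /\ temperate A2).
Proof.
move=> _ _ _ _ eqA.
exact: iff_trans (temperate_col_perm_eqmx eqA) (temperate_block A1 A2).
Qed.
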